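(* Let $F$ be a right exact functor from groups to groups, i.e. for every short exact sequence $1\to K\to E\to G\to 1$ the induced sequence $F K\to F E\to F G\to 1$ is exact. Then $F$ is conditionally flat.
   Context: For a functor $F$ on groups, a group extension $1\to N\to E\to Q\to 1$ is $F$-flat if $1\to FN\to FE\to FQ\to 1$ (induced maps) is again a short exact sequence. $F$ is conditionally flat if for every $F$-flat extension $1\to N\to E\to Q\to 1$ and every homomorphism $Q'\to Q$, the pullback extension $1\to N\to E\times_Q Q'\to Q'\to 1$ is $F$-flat. *)

From Stdlib Require Import ProofIrrelevance.
Set Implicit Arguments.

Record Grp := {
  gcar :> Type;
  gmul : gcar -> gcar -> gcar;
  gone : gcar;
  ginv : gcar -> gcar;
  gmulA : forall x y z, gmul x (gmul y z) = gmul (gmul x y) z;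
  gmul1g : forall x, gmul gone x = x;
  gmulg1 : forall x, gmul x gone = x;
  gmulVg : forall x, gmul (ginv x) x = gone;
  gmulgV : forall x, gmul x (ginv x) = gone
}.
Arguments gmul {g} _ _.
Arguments gone {g}.
Arguments ginv {g} _.

Record Hom (G H : Grp) := {
  hfun :> G -> H;
  hmul : forall x y, hfun (gmul x y) = gmul (hfun x) (hfun y)
}.

Lemma hom_one (G H : Grp) (f : Hom G H) : f gone = gone.
Proof.
  assert (E : f gone = gmul (f gone) (f gone)) by (rewrite <- hmul, gmul1g; reflexivity).
  assert (E2 : gmul (ginv (f gone)) (f gone) = gmul (ginv (f gone)) (gmul (f gone) (f gone)))
    by (rewrite <- E; reflexivity).
  rewrite gmulA, gmulVg, gmul1g in E2. symmetry; exact E2.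
Qed.

Definition id_hom (G : Grp) : Hom G G := {| hfun := fun x => x; hmul := fun x y => eq_refl |}.

Definition comp_hom (G H K : Grp) (g : Hom H K) (f : Hom G H) : Hom G K.
Proof.
  refine {| hfun := fun x => g (f x) |}.
  intros x y; rewrite !hmul; reflexivity.
Defined.

Record Functor := {
  Fobj :> Grp -> Grp;
  Fmap : forall G H : Grp, Hom G H -> Hom (Fobj G) (Fobj H);
  Fmap_id : forall (G : Grp) (x : Fobj G), Fmap (id_hom G) x = x;
  Fmap_comp : forall (G H K : Grp) (f : Hom G H) (g : Hom H K) (x : Fobj G),
      Fmap (comp_hom g f) x = Fmap g (Fmap f x)
}.
Arguments Fmap _ {G H} _.

Definition injective_hom (G H : Grp) (f : Hom G H) : Prop :=
  forall x y, f x = f y -> x = y.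
Definition surjective_hom (G H : Grp) (f : Hom G H) : Prop :=
  forall y, exists x, f x = y.
Definition exact_at (A B C : Grp) (i : Hom A B) (p : Hom B C) : Prop :=
  forall b, (exists a, i a = b) <-> p b = gone.
Definition short_exact (A B C : Grp) (i : Hom A B) (p : Hom B C) : Prop :=
  injective_hom i /\ exact_at i p /\ surjective_hom p.

Definition right_exact (F : Functor) : Prop :=
  forall (K E G : Grp) (i : Hom K E) (p : Hom E G),
    short_exact i p -> exact_at (Fmap F i) (Fmap F p) /\ surjective_hom (Fmap F p).

Definition F_flat (F : Functor) (N E Q : Grp) (i : Hom N E) (p : Hom E Q) : Prop :=
  short_exact (Fmap F i) (Fmap F p).

Lemma ses_comp_trivial (N E Q : Grp) (i : Hom N E) (p : Hom E Q) :
  short_exact i p -> forall n, p (i n) = gone.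
Proof. intros [_ [Hx _]] n. apply (proj1 (Hx (i n))). exists n; reflexivity. Qed.

Section Pullback.
Variables (N E Q Q' : Grp) (p : Hom E Q) (h : Hom Q' Q).

Definition pb_car : Type := { x : E * Q' | p (fst x) = h (snd x) }.

Definition pb_mul (x y : pb_car) : pb_car.
Proof.
  refine (exist _ (gmul (fst (proj1_sig x)) (fst (proj1_sig y)),
                   gmul (snd (proj1_sig x)) (snd (proj1_sig y))) _).
  simpl; rewrite !hmul, (proj2_sig x), (proj2_sig y); reflexivity.
Defined.

Definition pb_one : pb_car.
Proof. refine (exist _ (gone, gone) _); simpl; rewrite !hom_one; reflexivity. Defined.

Lemma hom_inv (G H : Grp) (f : Hom G H) (x : G) : f (ginv x) = ginv (f x).
Proof.
  assert (E1 : gmul (f (ginv x)) (f x) = gone) by (rewrite <- hmul, gmulVg; apply hom_one).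
  assert (E2 : gmul (gmul (f (ginv x)) (f x)) (ginv (f x)) = ginv (f x))
    by (rewrite E1; apply gmul1g).
  rewrite <- gmulA, gmulgV, gmulg1 in E2; exact E2.
Qed.

Definition pb_inv (x : pb_car) : pb_car.
Proof.
  refine (exist _ (ginv (fst (proj1_sig x)), ginv (snd (proj1_sig x))) _).
  simpl; rewrite !hom_inv, (proj2_sig x); reflexivity.
Defined.

Lemma pb_eq (x y : pb_car) : proj1_sig x = proj1_sig y -> x = y.
Proof. destruct x, y; simpl; intros ->; f_equal; apply proof_irrelevance. Qed.

Definition pb_grp : Grp.
Proof.
  refine {| gcar := pb_car; gmul := pb_mul; gone := pb_one; ginv := pb_inv |}.
  - intros [[a b] ?] [[c d] ?] [[e1 f1] ?]; apply pb_eq; simpl; rewrite !gmulA; reflexivity.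
  - intros [[a b] ?]; apply pb_eq; simpl; rewrite !gmul1g; reflexivity.
  - intros [[a b] ?]; apply pb_eq; simpl; rewrite !gmulg1; reflexivity.
  - intros [[a b] ?]; apply pb_eq; simpl; rewrite !gmulVg; reflexivity.
  - intros [[a b] ?]; apply pb_eq; simpl; rewrite !gmulgV; reflexivity.
Defined.

Definition pb_i_fun (i : Hom N E) (Hc : forall n, p (i n) = gone) (n : N) : pb_car.
Proof. refine (exist _ (i n, gone) _); simpl; rewrite (Hc n), (hom_one h); reflexivity. Defined.

Definition pb_i (i : Hom N E) (Hc : forall n, p (i n) = gone) : Hom N pb_grp.
Proof.
  refine {| hfun := (pb_i_fun i Hc : N -> pb_grp) |}.
  intros x y; apply pb_eq; simpl; rewrite (hmul i), (gmul1g Q'); reflexivity.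
Defined.

Definition pb_p : Hom pb_grp Q'.
Proof. refine {| hfun := (fun x : pb_car => snd (proj1_sig x)) : pb_grp -> Q' |}; reflexivity. Defined.
End Pullback.

Definition conditionally_flat (F : Functor) : Prop :=
  forall (N E Q : Grp) (i : Hom N E) (p : Hom E Q) (Hses : short_exact i p),
    F_flat F i p ->
    forall (Q' : Grp) (h : Hom Q' Q),
      F_flat F (pb_i p h i (ses_comp_trivial Hses)) (pb_p p h).

From Stdlib Require Import ProofIrrelevance FunctionalExtensionality.
Set Implicit Arguments.

(* Let 1 -> N -> E -> Q -> 1 be F-flat and h : Q' -> Q.
   (1) The pullback sequence 1 -> N -> E x_Q Q' -> Q' -> 1 is again short
       exact (a purely group-theoretic fact), so right exactness of F gives
       exactness of F N -> F (E x_Q Q') -> F Q' -> 1.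
   (2) It remains to see that F N -> F (E x_Q Q') is injective.  The inclusion
       N -> E x_Q Q' followed by the first projection E x_Q Q' -> E is the
       original inclusion i, so by functoriality F i factors through
       F N -> F (E x_Q Q'); as F i is injective (flatness of the original
       extension), so is its first factor. *)

Lemma hom_ext (G H : Grp) (f g : Hom G H) : (forall x, f x = g x) -> f = g.
Proof.
  destruct f as [f fm], g as [g gm]; simpl; intros E.
  assert (f = g) by (apply functional_extensionality; exact E). subst g.
  f_equal; apply proof_irrelevance.
Qed.

Lemma injective_hom_comp_l (G H K : Grp) (f : Hom G H) (g : Hom H K) :
  injective_hom (comp_hom g f) -> injective_hom f.
Proof. intros Hinj x y Hxy; apply Hinj; simpl; rewrite Hxy; reflexivity. Qed.

Lemma Fmap_comp_hom (F : Functor) (G H K : Grp) (f : Hom G H) (g : Hom H K) :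
  Fmap F (comp_hom g f) = comp_hom (Fmap F g) (Fmap F f).
Proof. apply hom_ext; intros x; apply Fmap_comp. Qed.

Section PullbackExtension.
Variables (N E Q Q' : Grp) (i : Hom N E) (p : Hom E Q) (h : Hom Q' Q).
Hypothesis Hses : short_exact i p.
(* The witness of p o i = 1 that conditionally_flat uses to build the
   pulled-back inclusion N -> E x_Q Q'. *)
Let Hc : forall n, p (i n) = gone := ses_comp_trivial Hses.

Definition pb_pr1 : Hom (pb_grp p h) E.
Proof.
  refine {| hfun := (fun x : pb_car p h => fst (proj1_sig x)) : pb_grp p h -> E |}.
  reflexivity.
Defined.

Lemma pb_pr1_pb_i (Hpi : forall n, p (i n) = gone) :
  comp_hom pb_pr1 (pb_i p h i Hpi) = i.
Proof. apply hom_ext; reflexivity. Qed.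

Lemma pullback_short_exact : short_exact (pb_i p h i Hc) (pb_p p h).
Proof.
  pose proof Hses as [Hinj [Hex Hsur]]; split; [|split].
  - apply (injective_hom_comp_l (g := pb_pr1)).
    rewrite pb_pr1_pb_i; exact Hinj.
  - intros [[e q] He]; simpl; split.
    + intros [n Hn].
      apply (f_equal (fun z : pb_car p h => snd (proj1_sig z))) in Hn.
      exact (eq_sym Hn).
    + intros ->.
      assert (Hpe : p e = gone) by (simpl in He; rewrite He; apply hom_one).
      destruct (proj2 (Hex e) Hpe) as [n Hn].
      exists n; apply pb_eq; simpl; rewrite Hn; reflexivity.
  - intros q. destruct (Hsur (h q)) as [e He].
    exists (exist _ (e, q) He : pb_car p h); reflexivity.
Qed.

Lemma Fmap_pb_i_injective (F : Functor) :
  F_flat F i p -> injective_hom (Fmap F (pb_i p h i Hc)).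
Proof.
  intros [HFi _].
  apply (injective_hom_comp_l (g := Fmap F pb_pr1)).
  rewrite <- Fmap_comp_hom, pb_pr1_pb_i; exact HFi.
Qed.

End PullbackExtension.

Theorem proposition3p4 (F : Functor) : right_exact F -> conditionally_flat F.
Proof.
  intros HF N E Q i p Hses Hflat Q' h.
  destruct (HF _ _ _ _ _ (pullback_short_exact h Hses)) as [Hexact Hsurj].
  split; [|split].
  - exact (Fmap_pb_i_injective h Hses Hflat).
  - exact Hexact.
  - exact Hsurj.
Qed.
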